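(* Let $L\subseteq\Sigma^*$ be regular. (1) The map \[\mathrm{LQ}(L)\to\big(\{\mathrm{DR}_L[X]: X\subseteq \mathrm{LW}(L)\},\cup,\emptyset\big),\qquad K\mapsto\{v^{-1}L^r: v\in K^r\},\] is a well-defined isomorphism of semilattices (its codomain being a $\cup$-subsemilattice of $\mathcal{P}(\mathrm{LW}(L^r))$). (2) For all $u,v\in\Sigma^*$: $\mathrm{DR}_L(u^{-1}L,v^{-1}L^r)$ holds iff $u^{-1}L\not\subseteq \mathrm{dr}_L(v^{-1}L^r)$. (3) $\mathrm{dr}_L$ restricts to a bijection from $J(\mathrm{LQ}(L^r))$ onto $M(\mathrm{LQ}(L))$, and for all $j\in J(\mathrm{LQ}(L))$ and $k\in J(\mathrm{LQ}(L^r))$ we have $\mathrm{RDR}_L(j,k)$ iff $j\not\subseteq\mathrm{dr}_L(k)$.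
   Context: $u^{-1}L=\{w:uw\in L\}$, $U^{-1}L=\bigcup_{u\in U}u^{-1}L$; $\mathrm{LW}(L)=\{u^{-1}L:u\in\Sigma^*\}$; $\mathrm{LQ}(L)$ is the set of all finite unions (including $\emptyset$) of members of $\mathrm{LW}(L)$, a finite lattice under inclusion. $w^r$ is the reversal of $w$, $K^r=\{w^r:w\in K\}$, $\overline K=\Sigma^*\setminus K$. The dependency relation $\mathrm{DR}_L\subseteq\mathrm{LW}(L)\times\mathrm{LW}(L^r)$ is defined by $\mathrm{DR}_L(u^{-1}L,v^{-1}L^r)\iff uv^r\in L$ (well-defined), and $\mathrm{DR}_L[X]=\{y:\exists x\in X,\ \mathrm{DR}_L(x,y)\}$. For a finite lattice $S$, $J(S)$ is the set of join-irreducible elements ($j$ such that $j=\bigvee X$, $X$ finite, implies $j\in X$; in particular $j\neq\bot$) and $M(S)$ the set of meet-irreducible elements (dually). The reduced dependency relation is $\mathrm{RDR}_L=\mathrm{DR}_L\cap(J(\mathrm{LQ}(L))\times J(\mathrm{LQ}(L^r)))$. $\mathrm{dr}_L\colon\mathrm{LQ}(L^r)\to\mathrm{LQ}(L)$ is the map $K\mapsto(\overline{K^r})^{-1}L$, which is an order-reversing bijection. *)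

From Stdlib Require Import List.
From mathcomp Require Import all_boot.
From mathcomp Require Import boolp classical_sets.
Set Implicit Arguments. Unset Strict Implicit. Unset Printing Implicit Defensive.
Local Open Scope classical_set_scope.

Section Lang.
Variable S : finType.
Notation word := (seq S).

Definition regular (L : set word) : Prop :=
  exists (Q : finType) (d : Q -> S -> Q) (q0 : Q) (F : set Q),
    forall w, L w <-> F (foldl d q0 w).

Definition lquot (u : word) (L : set word) : set word := [set w | L (u ++ w)].
Definition lquotS (U : set word) (L : set word) : set word :=
  [set w | exists2 u, U u & L (u ++ w)].
Definition rlang (K : set word) : set word := [set w | K (rev w)].

Definition LW (L : set word) : set (set word) := [set K | exists u, K = lquot u L].
(* LQ(L): finite unions (including the empty one) of members of LW(L) *)
Definition LQ (L : set word) : set (set word) :=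
  [set K | exists s : seq word, K = \bigcup_(u in [set` s]) lquot u L].

Definition DR (L : set word) (x y : set word) : Prop :=
  exists u v, [/\ x = lquot u L, y = lquot v (rlang L) & L (u ++ rev v)].
Definition DRimg (L : set word) (X : set (set word)) : set (set word) :=
  [set y | exists2 x, X x & DR L x y].

Definition phi (L : set word) (K : set word) : set (set word) :=
  [set y | exists2 v, rlang K v & y = lquot v (rlang L)].

Definition dr (L : set word) (K : set word) : set word := lquotS (~` rlang K) L.

End Lang.

Section Lat.
Variable T : Type.
Definition is_lub (P : set (set T)) (X : set (set T)) (j : set T) : Prop :=
  [/\ P j, (forall x, X x -> x `<=` j) &
      (forall z, P z -> (forall x, X x -> x `<=` z) -> j `<=` z)].
Definition is_glb (P : set (set T)) (X : set (set T)) (m : set T) : Prop :=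
  [/\ P m, (forall x, X x -> m `<=` x) &
      (forall z, P z -> (forall x, X x -> z `<=` x) -> z `<=` m)].
Definition JI (P : set (set T)) (j : set T) : Prop :=
  P j /\ forall s : seq (set T), (forall x, List.In x s -> P x) ->
           is_lub P [set x | List.In x s] j -> List.In j s.
Definition MI (P : set (set T)) (m : set T) : Prop :=
  P m /\ forall s : seq (set T), (forall x, List.In x s -> P x) ->
           is_glb P [set x | List.In x s] m -> List.In m s.
End Lat.

Definition RDR (S : finType) (L : set (seq S)) (j k : set (seq S)) : Prop :=
  [/\ DR L j k, JI (LQ L) j & JI (LQ (rlang L)) k].

From mathcomp Require Import all_boot.
From mathcomp Require Import boolp classical_sets.
Local Open Scope classical_set_scope.
Set Implicit Arguments. Unset Strict Implicit.

(* Everything rests on the identity  v^{-1}L^r (rev u) <-> L (u ++ rev v)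
   <-> u^{-1}L (rev v), i.e. DR_L(u^{-1}L, v^{-1}L^r) <-> u (rev v) in L.
   (1) phi maps a union of left quotients  U^{-1}L  to the DR_L-image of
       {u^{-1}L : u in U}; it commutes with unions, reflects inclusion, and
       every DR_L-image arises this way once L has finitely many quotients
       (so that an arbitrary union of quotients is a finite one).
   (2) u^{-1}L is contained in dr_L(K) exactly when rev u is not in K, for
       K a union of quotients of L^r.
   (3) dr_L : LQ(L^r) -> LQ(L) is an order-reversing bijection with inverse
       dr_{L^r}.  An abstract section shows that any such "antitone
       isomorphism" between families of sets exchanges join- and
       meet-irreducibles; join-irreducibles of LQ are single quotients, so
       the RDR statement reduces to (2). *)

Lemma In_mem (T : eqType) (x : T) (s : seq T) : List.In x s <-> x \in s.
Proof.
elim: s => [|y s IH] //=; rewrite in_cons; split.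
- by case=> [->|/IH ->]; rewrite ?eqxx ?orbT.
- by case/orP => [/eqP ->|/IH]; [left|right].
Qed.

Lemma In_map_image (A B : Type) (h : A -> B) (s : seq A) :
  [set x | List.In x (map h s)] = h @` [set x | List.In x s].
Proof.
apply/seteqP; split=> x.
- by move=> /List.in_map_iff [a [<- sa]]; exists a.
- by case=> a sa <-; apply/List.in_map_iff; exists a.
Qed.

Lemma finite_representatives (A : eqType) (T : finType) (g : A -> T) (U : set A) :
  exists2 s : seq A, [set` s] `<=` U &
    forall u, U u -> exists2 u', u' \in s & g u' = g u.
Proof.
pose pick (t : T) : option A :=
  if pselect (exists2 u, U u & g u = t) is left ex then Some (projT1 (cid2 ex))
  else None.
have pickP t u : pick t = Some u -> U u /\ g u = t.
  rewrite /pick; case: pselect => // ex [<-].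
  by case: (cid2 ex) => u' Uu' gu'.
exists (pmap pick (enum T)).
  by move=> u; rewrite /= mem_pmap => /mapP [t _ /esym /pickP []].
move=> u Uu; case def_t: (pick (g u)) => [u'|].
  have [_ gu'] := pickP _ _ def_t.
  by exists u' => //; rewrite mem_pmap; apply/mapP; exists (g u); rewrite ?mem_enum.
by move: def_t; rewrite /pick; case: pselect => // -[]; exists u.
Qed.

Section AntitoneIsomorphism.
Variable T : Type.
Implicit Types (P Q X : set (set T)) (a b j m : set T).

Definition anti_iso P Q (h k : set T -> set T) : Prop :=
  [/\ forall a, P a -> Q (h a), forall b, Q b -> P (k b),
      forall a, P a -> k (h a) = a, forall b, Q b -> h (k b) = b &
      forall a a', P a -> P a' -> (h a `<=` h a' <-> a' `<=` a)].

Lemma anti_iso_sym P Q h k : anti_iso P Q h k -> anti_iso Q P k h.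
Proof.
case=> PQ QP kh hk ord; split=> // b b' Qb Qb'.
have := ord _ _ (QP _ Qb') (QP _ Qb); rewrite !hk //.
by move=> E; split=> /E.
Qed.

Lemma anti_iso_inj P Q h k a a' :
  anti_iso P Q h k -> P a -> P a' -> h a = h a' -> a = a'.
Proof. by case=> _ _ kh _ _ Pa Pa' E; rewrite -(kh _ Pa) -(kh _ Pa') E. Qed.

Lemma anti_iso_lub P Q h k X j : anti_iso P Q h k -> X `<=` P ->
  is_lub P X j -> is_glb Q (h @` X) (h j).
Proof.
case=> PQ QP kh hk ord XP [Pj ub least]; split; first exact: PQ.
- by move=> _ [x Xx <-]; apply/(ord _ _ Pj (XP _ Xx)); exact: ub.
- move=> z Qz lbz; rewrite -(hk _ Qz); apply/(ord _ _ (QP _ Qz) Pj).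
  apply: least => [|x Xx]; first exact: QP.
  by apply/(ord _ _ (QP _ Qz) (XP _ Xx)); rewrite hk //; apply: lbz; exists x.
Qed.

Lemma anti_iso_glb P Q h k X m : anti_iso P Q h k -> X `<=` P ->
  is_glb P X m -> is_lub Q (h @` X) (h m).
Proof.
case=> PQ QP kh hk ord XP [Pm lb greatest]; split; first exact: PQ.
- by move=> _ [x Xx <-]; apply/(ord _ _ (XP _ Xx) Pm); exact: lb.
- move=> z Qz ubz; rewrite -(hk _ Qz); apply/(ord _ _ Pm (QP _ Qz)).
  apply: greatest => [|x Xx]; first exact: QP.
  by apply/(ord _ _ (XP _ Xx) (QP _ Qz)); rewrite hk //; apply: ubz; exists x.
Qed.

(* Join-irreducibles go to meet-irreducibles: pull a finite meet back
   through the inverse and use irreducibility upstairs. *)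
Lemma anti_iso_JI P Q h k j : anti_iso P Q h k -> JI P j -> MI Q (h j).
Proof.
move=> iso [Pj irr]; have [PQ QP kh hk _] := iso; split; first exact: PQ.
move=> t tQ glb_t.
have kt_P x : List.In x (map k t) -> P x.
  by move=> /List.in_map_iff [b [<- /tQ /QP]].
have lub_kt : is_lub P [set x | List.In x (map k t)] j.
  by rewrite In_map_image -(kh _ Pj); apply: anti_iso_glb (anti_iso_sym iso) _ glb_t.
have /List.in_map_iff [b [<- tb]] := irr _ kt_P lub_kt.
by rewrite hk //; apply: tQ.
Qed.

Lemma anti_iso_MI P Q h k m : anti_iso P Q h k -> MI P m -> JI Q (h m).
Proof.
move=> iso [Pm irr]; have [PQ QP kh hk _] := iso; split; first exact: PQ.
move=> t tQ lub_t.
have kt_P x : List.In x (map k t) -> P x.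
  by move=> /List.in_map_iff [b [<- /tQ /QP]].
have glb_kt : is_glb P [set x | List.In x (map k t)] m.
  by rewrite In_map_image -(kh _ Pm); apply: anti_iso_lub (anti_iso_sym iso) _ lub_t.
have /List.in_map_iff [b [<- tb]] := irr _ kt_P glb_kt.
by rewrite hk //; apply: tQ.
Qed.

End AntitoneIsomorphism.

Section Quotients.
Variable S : finType.
Notation word := (seq S).
Implicit Types (L M K : set word) (U V : set word) (u v w : word).

Lemma rlangK L : rlang (rlang L) = L.
Proof. by apply/seteqP; split=> x; rewrite /rlang /= revK. Qed.

Lemma lquot_rlang L v w : lquot v (rlang L) w = L (rev w ++ rev v).
Proof. by rewrite /lquot /rlang /= rev_cat. Qed.

(* DR_L is well defined: it only depends on the word u (rev v). *)
Lemma DR_lquotE L u v : DR L (lquot u L) (lquot v (rlang L)) <-> L (u ++ rev v).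
Proof.
split; last by move=> H; exists u, v.
case=> u' [v' [Eu Ev Luv']].
have Luv : lquot u L (rev v') by rewrite Eu.
have : lquot v' (rlang L) (rev u) by rewrite lquot_rlang revK.
by rewrite -Ev lquot_rlang revK.
Qed.

Definition finite_quotients M : Prop := exists (T : finType) (g : word -> T),
  forall u u', g u = g u' -> lquot u M = lquot u' M.

(* For a DFA language, a quotient is determined by the state reached. *)
Lemma regular_finite_quotients L : regular L -> finite_quotients L.
Proof.
case=> Q [d [q0 [F accept]]]; exists Q, (foldl d q0) => u u' E.
by apply/seteqP; split=> w; rewrite /lquot /= !accept !foldl_cat E.
Qed.

(* A quotient v^{-1}L^r is determined by the set of states from which
   reading rev v leads to acceptance. *)
Lemma regular_rlang_finite_quotients L : regular L -> finite_quotients (rlang L).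
Proof.
case=> Q [d [q0 [F accept]]].
exists {ffun Q -> bool}, (fun v => [ffun q => `[< F (foldl d q (rev v)) >]]).
move=> v v' E; rewrite predeqE => w; rewrite !lquot_rlang !accept !foldl_cat.
have := congr1 (fun f : {ffun Q -> bool} => f (foldl d q0 (rev w))) E.
by rewrite /= !ffunE; exact: asbool_eq_equiv.
Qed.

Lemma LQ_lquot M u : LQ M (lquot u M).
Proof. by exists [:: u]; rewrite set_cons1 bigcup_set1. Qed.

Lemma LQ_bigcup M U : finite_quotients M -> LQ M (\bigcup_(u in U) lquot u M).
Proof.
case=> T [g fibre]; have [s sU rep] := finite_representatives g U.
exists s; apply/seteqP; split=> w [u Uu Hw].
- by have [u' su' gu'] := rep _ Uu; exists u' => //; rewrite (fibre _ _ gu').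
- by exists u => //; apply: sU.
Qed.

Lemma JI_lquot M j : JI (LQ M) j -> exists u, j = lquot u M.
Proof.
case=> -[s def_j] irr.
have : List.In j (map (fun u => lquot u M) s).
  apply: irr; first by move=> _ /List.in_map_iff [u [<- _]]; apply: LQ_lquot.
  rewrite In_map_image; split; first by exists s.
  - by move=> _ [u /In_mem su <-] w Hw; rewrite def_j; exists u.
  - by move=> z _ ub w; rewrite def_j => -[u /In_mem su]; apply: ub; exists u.
by move=> /List.in_map_iff [u [<- _]]; exists u.
Qed.

Lemma phi_bigcup L U :
  phi L (\bigcup_(u in U) lquot u L) = DRimg L ((fun u => lquot u L) @` U).
Proof.
apply/seteqP; split=> y.
- case=> v [u Uu Hv] ->; exists (lquot u L); first by exists u.
  exact/DR_lquotE.
- case=> _ [u Uu <-] [u' [v [Eu -> Luv]]]; exists v => //; exists u => //.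
  by rewrite Eu.
Qed.

Lemma phi_subset L K U :
  phi L K `<=` phi L (\bigcup_(u in U) lquot u L) ->
  K `<=` \bigcup_(u in U) lquot u L.
Proof.
move=> sub w Kw.
have /sub [v' [u Uu Hu] Ev] : phi L K (lquot (rev w) (rlang L)).
  by exists (rev w); rewrite // /rlang /= revK.
exists u => //.
have : lquot v' (rlang L) (rev u) by rewrite lquot_rlang revK.
by rewrite -Ev lquot_rlang !revK.
Qed.

Lemma phi_setU L K1 K2 : phi L (K1 `|` K2) = phi L K1 `|` phi L K2.
Proof.
apply/seteqP; split=> y.
- by case=> v [] Kv ->; [left|right]; exists v.
- by case=> -[v Kv ->]; exists v => //; [left|right].
Qed.

Lemma phi_set0 L : phi L set0 = set0.
Proof. by apply/seteqP; split=> y // -[]. Qed.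

Lemma DRimg_setU L X Y : DRimg L X `|` DRimg L Y = DRimg L (X `|` Y).
Proof.
apply/seteqP; split=> y.
- by case=> -[x Xx D]; exists x => //; [left|right].
- by case=> x [] Xx D; [left|right]; exists x.
Qed.

Lemma phi_LQ L K : LQ L K -> exists2 X, X `<=` LW L & phi L K = DRimg L X.
Proof.
case=> s ->; exists ((fun u => lquot u L) @` [set` s]); last exact: phi_bigcup.
by move=> _ [u _ <-]; exists u.
Qed.

Lemma phi_inj L K1 K2 : LQ L K1 -> LQ L K2 -> phi L K1 = phi L K2 -> K1 = K2.
Proof.
case=> s1 -> [s2 ->] E.
by apply/seteqP; split; apply: phi_subset; rewrite E.
Qed.

Lemma phi_onto L X : finite_quotients L -> X `<=` LW L ->
  exists2 K, LQ L K & phi L K = DRimg L X.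
Proof.
move=> fin XLW; exists (\bigcup_(u in [set u | X (lquot u L)]) lquot u L).
  exact: LQ_bigcup.
rewrite phi_bigcup; congr DRimg; apply/seteqP; split=> x.
- by move=> [u Xu <-].
- by move=> Xx; have [u def_x] := XLW _ Xx; exists u; rewrite /= -def_x.
Qed.

Lemma lquot_sub_dr L V u :
  lquot u L `<=` dr L (\bigcup_(v in V) lquot v (rlang L)) <->
  ~ (\bigcup_(v in V) lquot v (rlang L)) (rev u).
Proof.
split; last by move=> notK w Hw; exists u.
move=> sub [v Vv Hv].
have /sub [u' notKu' Hw] : lquot u L (rev v) by move: Hv; rewrite lquot_rlang revK.
by apply: notKu'; exists v => //; rewrite lquot_rlang revK.
Qed.

Lemma DR_not_sub_dr L u v :
  DR L (lquot u L) (lquot v (rlang L)) <-> ~ (lquot u L `<=` dr L (lquot v (rlang L))).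
Proof.
have := lquot_sub_dr L [set v] u; rewrite bigcup_set1 lquot_rlang revK => sub_iff.
rewrite DR_lquotE; split=> [Luv /sub_iff //|notsub].
by apply: contrapT => notLuv; apply/notsub/sub_iff.
Qed.

Lemma dr_anti L K1 K2 : K2 `<=` K1 -> dr L K1 `<=` dr L K2.
Proof. by move=> sub w [u Ku Hw]; exists u => // /sub. Qed.

Lemma dr_subset L V1 V2 :
  let K1 := \bigcup_(v in V1) lquot v (rlang L) in
  let K2 := \bigcup_(v in V2) lquot v (rlang L) in
  dr L K1 `<=` dr L K2 <-> K2 `<=` K1.
Proof.
move=> K1 K2; split; last exact: dr_anti.
move=> sub w K2w; apply: contrapT => notK1w.
have /lquot_sub_dr : lquot (rev w) L `<=` dr L K2.
  apply: subset_trans sub => x Hx; exists (rev w) => //.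
  by rewrite /rlang /= revK.
by rewrite revK.
Qed.

(* dr_L o dr_{L^r} is the identity on LQ(L); instantiated at L^r it gives
   the other composite, since (L^r)^r = L. *)
Lemma dr_drK L U :
  dr L (dr (rlang L) (\bigcup_(u in U) lquot u L)) = \bigcup_(u in U) lquot u L.
Proof.
apply/seteqP; split=> w.
- case=> u notM Hw; apply: contrapT => notUw; apply: notM.
  exists (rev w); first by rewrite /rlang /= revK.
  by rewrite /rlang /= rev_cat !revK.
- case=> u Uu Hw; exists u => //.
  case=> v notM; rewrite /rlang /= rev_cat revK => Lvu; apply: notM.
  by exists u.
Qed.

Lemma dr_LQ L K : finite_quotients L -> LQ L (dr L K).
Proof. exact: LQ_bigcup. Qed.

Lemma anti_iso_dr L : regular L ->
  anti_iso (LQ (rlang L)) (LQ L) (dr L) (dr (rlang L)).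
Proof.
move=> regL; have finL := regular_finite_quotients regL.
have finLr := regular_rlang_finite_quotients regL.
split=> [K _|M _|_ [s ->]|_ [s ->]|_ _ [s1 ->] [s2 ->]].
- exact: dr_LQ.
- exact: dr_LQ.
- by have := dr_drK (rlang L) [set` s]; rewrite rlangK.
- exact: dr_drK.
- exact: dr_subset.
Qed.

End Quotients.

Theorem theorem3p11 (S : finType) (L : set (seq S)) (HL : regular L) :
  ((forall K, LQ L K -> exists2 X, X `<=` LW L & phi L K = DRimg L X) /\
   [/\ (forall X Y, X `<=` LW L -> Y `<=` LW L ->
         exists2 Z, Z `<=` LW L & DRimg L X `|` DRimg L Y = DRimg L Z),
      (forall K1 K2, LQ L K1 -> LQ L K2 -> phi L K1 = phi L K2 -> K1 = K2),
      (forall X, X `<=` LW L -> exists2 K, LQ L K & phi L K = DRimg L X),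
      (forall K1 K2, LQ L K1 -> LQ L K2 -> phi L (K1 `|` K2) = phi L K1 `|` phi L K2)
    & phi L set0 = set0]) /\
  (forall u v : seq S,
     DR L (lquot u L) (lquot v (rlang L)) <->
     ~ (lquot u L `<=` dr L (lquot v (rlang L)))) /\
  [/\ (forall k, JI (LQ (rlang L)) k -> MI (LQ L) (dr L k)),
      (forall k1 k2, JI (LQ (rlang L)) k1 -> JI (LQ (rlang L)) k2 ->
         dr L k1 = dr L k2 -> k1 = k2),
      (forall m, MI (LQ L) m -> exists2 k, JI (LQ (rlang L)) k & dr L k = m)
    & (forall j k, JI (LQ L) j -> JI (LQ (rlang L)) k ->
         (RDR L j k <-> ~ (j `<=` dr L k)))].
Proof.
have iso := anti_iso_dr HL.
split; [split; [exact: phi_LQ | split] | split; first exact: DR_not_sub_dr].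
- by move=> X Y XLW YLW; exists (X `|` Y); [move=> x [/XLW|/YLW] | exact: DRimg_setU].
- exact: phi_inj.
- by move=> X; apply: phi_onto; apply: regular_finite_quotients.
- by move=> K1 K2 _ _; apply: phi_setU.
- exact: phi_set0.
split.
- by move=> k; apply: anti_iso_JI iso.
- by move=> k1 k2 [Pk1 _] [Pk2 _]; apply: anti_iso_inj iso Pk1 Pk2.
- move=> m MIm; exists (dr (rlang L) m); first exact: anti_iso_MI (anti_iso_sym iso) _.
  by have [_ _ _ hk _] := iso; apply: hk; case: MIm.
- move=> j k JIj JIk; have [u def_j] := JI_lquot JIj; have [v def_k] := JI_lquot JIk.
  subst j k; split=> [[DRuv _ _]|notsub]; first exact: (proj1 (DR_not_sub_dr _ _ _) DRuv).
  split; [exact: (proj2 (DR_not_sub_dr _ _ _) notsub) | exact: JIj | exact: JIk].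
Qed.
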